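(* Let $r,q$ be positive integers with $q\ge r+1$, and let $G$ be a $2q$-path degenerate graph. Define $f(0)=1$ and, for integers $x\ge1$, \[ f(x)=\begin{cases} x+2+\log_2\!\left(\frac{q-1}{q-x}\right), & \text{if } q<2r,\\ x+2, & \text{otherwise.}\end{cases} \] Then $G$ has a good linear order with respect to $f$ up to $r$.
   Context: Graphs are finite and simple. A strict ear of a graph $G$ is a path of $G$ whose internal vertices all have degree $2$ in $G$ and whose two endpoints are distinct. For an integer $p\ge1$, a $p$-reduction of $G$ is the deletion of either an isolated vertex, or a vertex of degree $1$, or the internal vertices of a strict ear of $G$ of length at least $p$. A graph is $p$-path degenerate if it can be reduced to the empty graph by a sequence of $p$-reductions. For a linear order $\pi$ of $V(G)$, an integer $x\ge0$ and $u,v\in V(G)$, $u$ is weakly $x$-reachable from $v$ under $\pi$ if $u\le_\pi v$ and there is a $u$–$v$ path $P$ of length at most $x$ such that $u<_\pi w$ for every internal vertex $w$ of $P$. $\mathrm{WReach}_x[G,\pi,v]$ is the set of vertices weakly $x$-reachable from $v$. A linear order $\pi$ of $V(G)$ is a good linear order with respect to $f$ up to $r$ if $\max_{v\in V(G)}|\mathrm{WReach}_x[G,\pi,v]|\le f(x)$ for every integer $0\le x\le r$. *)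

From mathcomp Require Import all_boot.
From Stdlib Require Import Reals.

Set Implicit Arguments.
Unset Strict Implicit.
Unset Printing Implicit Defensive.

(* A finite simple graph: vertex type T : finType, adjacency e : rel T
   (assumed symmetric and irreflexive in the theorem).
   Intermediate graphs of a reduction sequence are induced subgraphs G[S]. *)

Definition deg (T : finType) (e : rel T) (S : {set T}) (v : T) : nat :=
  #|[set u in S | e v u]|.

(* x :: s is a path of G: consecutive vertices adjacent, all vertices distinct.
   Its length is size s; its endpoints are x and last x s. *)
Definition is_gpath (T : finType) (e : rel T) (x : T) (s : seq T) : bool :=
  path e x s && uniq (x :: s).

Definition internal (T : Type) (x : T) (s : seq T) : seq T :=
  behead (belast x s).

Definition strict_ear (T : finType) (e : rel T) (S : {set T}) (x : T) (s : seq T) : bool :=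
  [&& is_gpath e x s, all (fun w => w \in S) (x :: s), x != last x s
    & all (fun w => deg e S w == 2) (internal x s)].

Definition p_reduction (T : finType) (p : nat) (e : rel T) (S S' : {set T}) : Prop :=
  (exists v, [/\ v \in S, deg e S v = 0 & S' = S :\ v]) \/
  (exists v, [/\ v \in S, deg e S v = 1 & S' = S :\ v]) \/
  (exists x s, [/\ strict_ear e S x s, p <= size s
                 & S' = S :\: [set w | w \in internal x s]]).

Inductive reducible (T : finType) (p : nat) (e : rel T) : {set T} -> Prop :=
| reducible0 : reducible p e set0
| reducibleS S S' : p_reduction p e S S' -> reducible p e S' -> reducible p e S.

Definition path_degenerate (T : finType) (p : nat) (e : rel T) : Prop :=
  reducible p e [set: T].

(* linear order given by an injective rank pi : T -> nat (u <_pi v iff pi u < pi v).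
   u is weakly x-reachable from v: pi u <= pi v and there is a u-v path u :: t of
   length n <= x whose internal vertices w all satisfy pi u < pi w. *)
Definition wreachable (T : finType) (e : rel T) (pi : T -> nat) (x : nat) (v u : T) : bool :=
  (pi u <= pi v) &&
  [exists n : 'I_x.+1, exists t : (nat_of_ord n).-tuple T,
     [&& is_gpath e u t, last u t == v & all (fun w => pi u < pi w) (internal u t)]].

Definition WReach (T : finType) (e : rel T) (pi : T -> nat) (x : nat) (v : T) : {set T} :=
  [set u | wreachable e pi x v u].

Definition good_linear_order (T : finType) (e : rel T) (pi : T -> nat)
    (f : nat -> R) (r : nat) : Prop :=
  injective pi /\
  forall x : nat, x <= r -> forall v : T, (INR #|WReach e pi x v| <= f x)%R.

Definition log2 (y : R) : R := (ln y / ln 2)%R.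

Definition f_bound (q r : nat) (x : nat) : R :=
  if x == 0 then 1%R
  else if q < 2 * r then (INR x + 2 + log2 (INR (q - 1) / INR (q - x)))%R
  else (INR x + 2)%R.

From mathcomp Require Import all_boot zify.
From Stdlib Require Import Reals Lra.

Set Implicit Arguments.
Unset Strict Implicit.
Unset Printing Implicit Defensive.

(* Follow the reduction sequence backwards, ranking the vertices deleted by each
   reduction after all vertices that remain, and show |WReach_x[v]| <= g(x) with
   g(0) = 1 and g(x) = x + 2 + floor(log2 ((q-1)/(q-x))), which is at most f(x).
   A remaining vertex keeps its weakly reachable set: a path of length at most
   r < 2q between remaining vertices can neither pass through a vertex of degree
   at most one nor enter an ear of length at least 2q.  A deleted vertex of degree
   one weakly reaches itself and what its neighbour reaches in x - 1 steps.
   On a deleted ear p_0 ... p_{M+1} the centre p_q gets the smallest rank and the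
   ranks increase from both ends towards it.  From p_i with i <= q (the other half
   is symmetric) one then weakly reaches only p_i, ..., p_{i-x}, the vertices that
   p_0 weakly reaches in x - i steps, and possibly p_q.  The centre is reached only
   when i >= q - x, and then (q-1)/(q-x+i) is at most half of (q-1)/(q-x), so the
   logarithm pays for it. *)

Section Bound.
Variable q : nat.

Definition log_excess x := trunc_log 2 (q.-1 %/ (q - x)).

Definition wbound x := if x == 0 then 1 else x + 2 + log_excess x.

Lemma log_excess_mono x y : x <= y -> y < q -> log_excess x <= log_excess y.
Proof. by move=> lexy ltyq; apply/leq_trunc_log/leq_div2l; lia. Qed.

Lemma log_excess_halve x i :
  0 < i < x -> x < q -> q - x <= i -> log_excess (x - i) < log_excess x.
Proof.
move=> lt0ix ltxq leqxi; rewrite /log_excess.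
set d := q.-1 %/ (q - x).
have le_half : q.-1 %/ (q - (x - i)) <= d./2.
  by rewrite -divn2 /d -divnMA; apply: leq_div2l; lia.
have d_gt1 : 1 < d by rewrite leq_divRL; lia.
rewrite (trunc_log2S d_gt1) ltnS; exact: leq_trunc_log.
Qed.

Lemma wbound_ge1 x : 1 <= wbound x.
Proof. by rewrite /wbound; case: eqP => //; lia. Qed.

Lemma wbound_succ x : 0 < x -> x < q -> (wbound x.-1).+1 <= wbound x.
Proof.
case: x => [|x] // _ ltxq; rewrite /wbound /=.
have := @log_excess_mono x x.+1 (leqnSn x) ltxq.
by case: eqP => [->|_]; lia.
Qed.

(* The summands count, for the vertex p i of an ear with centre c, the ear
   vertices behind it, those reached through the end p 0, and the centre. *)
Lemma wbound_ear c x i : 0 < i -> x < q -> q <= c ->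
  (minn x i.-1).+1 + (if i <= x then wbound (x - i) else 0) +
  (if (i < c) && (c - i <= x) then 1 else 0) <= wbound x.
Proof.
move=> lt0i ltxq leqc; rewrite /wbound.
case: (posnP x) => [->|x_gt0] /=; first by do 2 case: ifP => ?; lia.
case: (ltngtP i x) => [ltix|ltxi|->]; last by rewrite subnn /=; case: ifP => ?; lia.
- have -> : (x - i == 0) = false by lia.
  case: (leqP (c - i) x) => [lecix|ltxci].
  + have := @log_excess_halve x i ltac:(lia) ltxq ltac:(lia); case: ifP => ?; lia.
  + have := @log_excess_mono (x - i) x (leq_subr _ _) ltxq; case: ifP => ?; lia.
- by case: ifP => ?; lia.
Qed.

End Bound.

Lemma INR_expn2 k : INR (expn 2 k) = (2 ^ k)%R.
Proof. by elim: k => [|k IHk] //; rewrite expnS mult_INR IHk. Qed.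

Lemma log_excess_le_log2 q x : 0 < x < q ->
  (INR (log_excess q x) <= log2 (INR (q - 1) / INR (q - x)))%R.
Proof.
move=> /andP[x_gt0 ltxq]; set d := q.-1 %/ (q - x).
have d_gt0 : 0 < d by rewrite divn_gt0; lia.
have pow_le : (2 ^ log_excess q x <= INR d)%R.
  by rewrite -INR_expn2; apply/le_INR/leP/trunc_logP.
have dq_le : (INR d * INR (q - x) <= INR (q - 1))%R.
  by rewrite -mult_INR; apply/le_INR/leP; rewrite subn1 leq_divM.
have qx_gt0 : (0 < INR (q - x))%R by apply/lt_0_INR/ltP; lia.
have pow_le_ratio : (2 ^ log_excess q x <= INR (q - 1) / INR (q - x))%R.
  apply: (Rmult_le_reg_r (INR (q - x))) => //.
  rewrite /Rdiv Rmult_assoc Rinv_l ?Rmult_1_r; nra.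
have ln2_gt0 : (0 < ln 2)%R by have := ln_lt_2; lra.
have ln_ratio : (INR (log_excess q x) * ln 2 <= ln (INR (q - 1) / INR (q - x)))%R.
  rewrite -ln_pow; last lra.
  have pow_gt0 : (0 < 2 ^ log_excess q x)%R by apply: pow_lt; lra.
  case: (Rle_lt_or_eq_dec _ _ pow_le_ratio) => [lt_ratio|->]; last exact: Rle_refl.
  exact/Rlt_le/ln_increasing.
apply: (Rmult_le_reg_r (ln 2)) => //.
by rewrite /log2 /Rdiv Rmult_assoc Rinv_l ?Rmult_1_r; lra.
Qed.

Lemma wbound_le_f_bound q r x : r < q -> x <= r -> (INR (wbound q x) <= f_bound q r x)%R.
Proof.
move=> ltrq lexr; rewrite /wbound /f_bound; case: eqP => [_|/eqP x_neq0]; first exact: Rle_refl.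
rewrite !plus_INR; case: ifP => [_|ge_q_2r].
- have := @log_excess_le_log2 q x ltac:(lia); rewrite /=; lra.
- have -> : log_excess q x = 0.
    by apply/eqP; rewrite trunc_log_eq0 /= -ltnS ltn_divLR; lia.
  rewrite /=; lra.
Qed.

Section Paths.
Variables (T : finType) (e : rel T).
Hypothesis e_sym : symmetric e.

Lemma mem_internalP (u w : T) t :
  reflect (exists2 k, 0 < k < size t & w = nth u (u :: t) k) (w \in internal u t).
Proof.
have nth_belast k : k < size t -> nth u (belast u t) k = nth u (u :: t) k.
  by move=> ltkt; rewrite [u :: t]lastI nth_rcons size_belast ltkt.
apply: (iffP (nthP u)); rewrite size_behead size_belast.
- move=> [k ltkt <-]; exists k.+1; first by rewrite /= -ltn_predRL.
  by rewrite /internal nth_behead nth_belast // -ltn_predRL.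
- move=> [[|k] // /andP[_ ltkt] ->]; exists k; first by rewrite ltn_predRL.
  by rewrite /internal nth_behead nth_belast.
Qed.

(* Paths of [G[S]] as functions on [0, n]; this avoids the tuple and
   default-element bookkeeping of [is_gpath]. *)
Definition ipath (S : {set T}) (y : nat -> T) n :=
  [/\ forall k, k < n -> e (y k) (y k.+1),
      forall k1 k2, k1 <= n -> k2 <= n -> y k1 = y k2 -> k1 = k2 &
      forall k, k <= n -> y k \in S].

Definition reach_path (S : {set T}) (pi : T -> nat) v u n y :=
  [/\ ipath S y n, y 0 = u, y n = v & forall k, 0 < k < n -> pi u < pi (y k)].

Definition reach (S : {set T}) (pi : T -> nat) x v u :=
  pi u <= pi v /\ exists n y, n <= x /\ reach_path S pi v u n y.

Definition reachb (S : {set T}) (pi : T -> nat) x v u : bool :=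
  (pi u <= pi v) &&
  [exists n : 'I_x.+1, exists t : (nat_of_ord n).-tuple T,
     [&& is_gpath e u t, all (mem S) (u :: t), last u t == v
       & all (fun w => pi u < pi w) (internal u t)]].

Definition reach_set (S : {set T}) pi x v := [set u | reachb S pi x v u].

Lemma reachP S pi x v u : reflect (reach S pi x v u) (reachb S pi x v u).
Proof.
apply: (iffP andP) => -[le_uv]; last first.
  move=> [n [y [lenx [[y_adj y_inj y_in] y0 yn y_int]]]].
  set t := mkseq (y \o succn) n.
  have nth_t k : k <= n -> nth u (u :: t) k = y k.
    by case: k => [|k] lekn /=; rewrite ?y0 ?nth_mkseq.
  split => //; apply/existsP; exists (Ordinal (lenx : n < x.+1)).
  apply/existsP; exists (Tuple (introT eqP (size_mkseq _ n) : size t == n)).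
  rewrite [tval _]/=; apply/and4P; split; first (apply/andP; split).
  - apply/(pathP u) => k; rewrite size_mkseq => ltkn.
    by rewrite -[nth u t k]/(nth u (u :: t) k.+1) !nth_t ?y_adj // ltnW.
  - apply/(uniqP u) => k1 k2; rewrite !inE /= size_mkseq !ltnS => le1 le2.
    by rewrite !nth_t //; exact: y_inj.
  - apply/allP => w /(nthP u) [k]; rewrite /= size_mkseq ltnS => lekn <-.
    by rewrite nth_t ?y_in.
  - by rewrite (last_nth u) size_mkseq nth_t ?yn.
  - apply/allP => w /mem_internalP [k]; rewrite size_mkseq => /andP[k_gt0 ltkn] ->.
    by rewrite nth_t ?y_int ?k_gt0 // ltnW.
move=> /existsP[n /existsP[t /and4P[/andP[t_path t_uniq] t_in /eqP t_last t_int]]].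
split => //; exists (size t), (nth u (u :: t)); split; first by rewrite size_tuple -ltnS.
split => //.
- split => [k ltkt|k1 k2 le1 le2|k lekt].
  + exact: (pathP u t_path).
  + by apply: (uniqP u t_uniq); rewrite inE /= ltnS.
  + by apply: (allP t_in); apply: mem_nth; rewrite /= ltnS.
- by rewrite -(last_nth u).
- by move=> k ltk; apply: (allP t_int); apply/mem_internalP; exists k.
Qed.

Lemma WReachE pi x v : WReach e pi x v = reach_set [set: T] pi x v.
Proof.
apply/setP => u; rewrite !inE /wreachable /reachb; congr (_ && _).
apply: eq_existsb => n; apply: eq_existsb => t.
by have -> : all (mem [set: T]) (u :: t) by apply/allP => w _; exact: in_setT.
Qed.

Lemma card_reach_set_le S pi x v (Z : {set T}) :
  (forall u, reach S pi x v u -> u \in Z) -> #|reach_set S pi x v| <= #|Z|.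
Proof.
by move=> reachZ; apply/subset_leq_card/subsetP => u; rewrite inE => /reachP /reachZ.
Qed.

Lemma deg_ge2 (S : {set T}) w z1 z2 : z1 \in S -> z2 \in S ->
  e w z1 -> e w z2 -> z1 != z2 -> 1 < deg e S w.
Proof.
move=> z1S z2S wz1 wz2 neq_z.
apply: leq_trans (_ : 2 <= #|[set z1; z2]|) _; first by rewrite cards2 neq_z.
by apply/subset_leq_card/subsetP => z; rewrite !inE => /orP[] /eqP ->; apply/andP.
Qed.

Lemma deg2_neighbours (S : {set T}) w z1 z2 z : deg e S w = 2 ->
  z1 \in S -> z2 \in S -> e w z1 -> e w z2 -> z1 != z2 ->
  z \in S -> e w z -> z = z1 \/ z = z2.
Proof.
move=> deg2 z1S z2S wz1 wz2 neq_z zS wz.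
have sub_nb : [set z1; z2] \subset [set u in S | e w u].
  by apply/subsetP => u; rewrite !inE => /orP[] /eqP ->; apply/andP.
have : z \in [set u in S | e w u] by rewrite inE zS.
have -> : [set u in S | e w u] = [set z1; z2].
  by apply/esym/eqP; rewrite eqEcard sub_nb cards2 neq_z; move: deg2; rewrite /deg => ->.
by rewrite !inE => /orP[] /eqP; [left|right].
Qed.

Lemma ipath_rev (S : {set T}) y n : ipath S y n -> ipath S (fun k => y (n - k)) n.
Proof.
case=> y_adj y_inj y_in; split => [k ltkn|k1 k2 le1 le2|k _]; last exact/y_in/leq_subr.
- by rewrite e_sym; have := y_adj (n - k.+1); rewrite -subSn //; apply; lia.
- by move/y_inj; rewrite !leq_subr => /(_ isT isT); lia.
Qed.

Lemma ipath_prefix (S : {set T}) y n m : ipath S y n -> m <= n -> ipath S y m.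
Proof.
case=> y_adj y_inj y_in lemn; split => [k ltkm|k1 k2 le1 le2|k lekm].
- by apply: y_adj; lia.
- by apply: y_inj; lia.
- by apply: y_in; lia.
Qed.

Lemma reach_refl (S : {set T}) pi x a : a \in S -> reach S pi x a a.
Proof.
move=> aS; split => //; exists 0, (fun _ => a); split => //.
by split => //; [split => // k1 k2; rewrite !leqn0 => /eqP -> /eqP -> | lia].
Qed.

Lemma reach0 (S : {set T}) pi v u : reach S pi 0 v u -> u = v.
Proof. by case=> _ [n [y [/[!leqn0]/eqP-> [_ <- <- _]]]]. Qed.

Lemma reach_last (S : {set T}) pi x v u : reach S pi x v u ->
  u = v \/ exists2 z, z \in S /\ e v z & reach S pi x.-1 z u.
Proof.
case=> le_uv [[|n] [y [lenx [y_path y0 yn y_int]]]]; first by left; rewrite -y0 yn.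
right; exists (y n).
  by case: y_path => y_adj _ y_in; rewrite -yn e_sym y_adj ?y_in.
split.
  by case: (posnP n) => [->|n_gt0]; [rewrite y0 | apply/ltnW/y_int; lia].
exists n, y; split; first lia.
split => //.
- exact: ipath_prefix y_path (leqnSn n).
- by move=> k ltk; apply: y_int; lia.
Qed.

Lemma ipath_avoid_leaf (S : {set T}) v y n : deg e S v <= 1 -> ipath S y n ->
  y 0 != v -> y n != v -> forall k, k <= n -> y k \in S :\ v.
Proof.
move=> deg_v [y_adj y_inj y_in] y0v ynv [|k] lekn; rewrite in_setD1 y_in // andbT //.
case: (ltnP k.+1 n) => [ltkn|?]; last by have -> : k.+1 = n by lia.
apply: contraTneq deg_v => ykv; rewrite -ltnNge.
apply: (@deg_ge2 _ _ (y k) (y k.+2)); rewrite ?y_in -?ykv ?y_adj //; try lia.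
- by rewrite e_sym y_adj.
- by apply/eqP => /y_inj; lia.
Qed.

Lemma ipath_along_chain (S : {set T}) y n (p : nat -> T) M k j :
  ipath S y n ->
  (forall j z, 0 < j <= M -> z \in S -> e (p j) z -> z = p j.-1 \/ z = p j.+1) ->
  y k = p j -> y k.+1 = p j.+1 ->
  forall t, k + t <= n -> j + t <= M.+1 -> y (k + t) = p (j + t).
Proof.
move=> [y_adj y_inj y_in] p_nb yk ykS.
have steps t : k + t.+1 <= n -> j + t.+1 <= M.+1 ->
    y (k + t) = p (j + t) /\ y (k + t.+1) = p (j + t.+1).
  elim: t => [|t IHt] lekn lejM; first by rewrite !addn0 !addn1.
  have [yt ytS] := IHt ltac:(lia) ltac:(lia); split => //.
  have ltjt : 0 < j + t.+1 <= M by lia.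
  have e_next : e (p (j + t.+1)) (y (k + t.+2)) by rewrite -ytS (addnS k t.+1) y_adj //; lia.
  case: (p_nb _ _ ltjt (y_in _ lekn) e_next) => [back|->]; last by rewrite (addnS j t.+1).
  have : y (k + t.+2) = y (k + t) by rewrite back yt (addnS j t).
  by move/y_inj; lia.
by case=> [|t] lekn lejM; [rewrite !addn0 | case: (steps t lekn lejM)].
Qed.

(* [p 0, ..., p M.+1] is an ear of [G[S]] whose internal vertices are exactly
   [S :\: S']; only the neighbourhoods of the internal vertices are recorded. *)
Definition ear_of (S S' : {set T}) (p : nat -> T) M :=
 [/\ forall j1 j2, j1 <= M.+1 -> j2 <= M.+1 -> p j1 = p j2 -> j1 = j2,
     forall j, j <= M.+1 -> p j \in S,
     forall j z, 0 < j <= M -> z \in S -> e (p j) z -> z = p j.-1 \/ z = p j.+1,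
     forall j, 0 < j <= M -> p j \notin S' &
     forall w, w \in S -> w \notin S' -> exists2 j, 0 < j <= M & w = p j].

Lemma ear_of_rev S S' p M : ear_of S S' p M -> ear_of S S' (fun j => p (M.+1 - j)) M.
Proof.
case=> p_inj p_in p_nb p_out p_onto; split => [j1 j2 le1 le2|j _|j z ltj zS|j ltj|w wS wS'].
- by move/p_inj; rewrite !leq_subr => /(_ isT isT); lia.
- exact/p_in/leq_subr.
- have ltj' : 0 < M.+1 - j <= M by lia.
  by case/(p_nb _ _ ltj' zS) => ->; [right|left]; congr p; lia.
- by apply: p_out; lia.
- by have [j ltj ->] := p_onto w wS wS'; exists (M.+1 - j); [lia | congr p; lia].
Qed.

Lemma ear_of_end0 S S' p M : ear_of S S' p M -> p 0 \in S'.
Proof.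
case=> p_inj p_in _ _ p_onto; apply: contraT => p0S'.
by have [j ltj /p_inj] := p_onto _ (p_in 0 isT) p0S'; lia.
Qed.

Section Crossing.
Variables (S S' : {set T}) (p : nat -> T) (M : nat).
Hypothesis ear : ear_of S S' p M.

Lemma ipath_cross_ear y n k j : ipath S y n -> y 0 \in S' -> y n \in S' ->
  0 < k < n -> 0 < j <= M -> y k = p j -> y k.+1 = p j.+1 -> M < n.
Proof.
move=> y_path y0S' ynS' ltk ltj yk ykS.
have [p_inj p_in p_nb p_out _] := ear.
have [y_adj y_inj y_in] := y_path.
have fwd : M.+1 <= j + (n - k).
  rewrite leqNgt; apply/negP => lt_end.
  have := ipath_along_chain y_path p_nb yk ykS (t := n - k).
  rewrite subnKC; last lia.
  move=> /(_ (leqnn n) (ltnW lt_end)) ynp.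
  by move: ynS'; rewrite ynp (negbTE (p_out _ _)) //; lia.
have ykP : y k.-1 = p j.-1.
  have ykP_in : y k.-1 \in S by apply: y_in; lia.
  have e_prev : e (p j) (y k.-1).
    by rewrite -yk e_sym; have := y_adj k.-1; rewrite prednK; [apply; lia | lia].
  case: (p_nb _ _ ltj ykP_in e_prev) => // y_back.
  by rewrite -ykS in y_back; have := y_inj _ _ _ _ y_back; lia.
have [_ _ q_nb q_out _] := ear_of_rev ear.
have rev_k : (fun t => y (n - t)) (n - k) = (fun i => p (M.+1 - i)) (M.+1 - j).
  by rewrite /= !subKn //; lia.
have rev_kS : (fun t => y (n - t)) (n - k).+1 = (fun i => p (M.+1 - i)) (M.+1 - j).+1.
  rewrite /= (_ : n - (n - k).+1 = k.-1); last lia.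
  by rewrite ykP; congr p; lia.
have bwd : j <= k.
  rewrite leqNgt; apply/negP => lt_start.
  have := ipath_along_chain (ipath_rev y_path) q_nb rev_k rev_kS (t := k).
  rewrite subnK; last lia.
  move=> /(_ (leqnn n)); rewrite subnn (_ : M.+1 - j + k <= M.+1); last lia.
  move=> /(_ isT) y0p.
  by move: y0S'; rewrite y0p (negbTE (q_out _ _)) //; lia.
lia.
Qed.

End Crossing.

Lemma ipath_short_avoid_ear S S' p M y n : ear_of S S' p M -> ipath S y n -> n <= M ->
  y 0 \in S' -> y n \in S' -> forall k, k <= n -> y k \in S'.
Proof.
move=> ear y_path lenM y0S' ynS' [|k] lekn //.
case: (ltnP k.+1 n) => [ltkn|?]; last by have -> : k.+1 = n by lia.
apply: contraT => ykS'.
have [p_inj p_in p_nb p_out p_onto] := ear.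
have [y_adj y_inj y_in] := y_path.
have [j ltj ykp] := p_onto _ (y_in _ lekn) ykS'.
have ltk : 0 < k.+1 < n by rewrite ltkn.
have e_next : e (p j) (y k.+2) by rewrite -ykp y_adj.
suff : M < n by lia.
case: (p_nb _ _ ltj (y_in _ ltkn) e_next) => ykSp.
- apply: (@ipath_cross_ear _ _ _ _ (ear_of_rev ear) y n k.+1 (M.+1 - j)) => //.
  + lia.
  + by rewrite ykp; congr p; lia.
  + by rewrite ykSp; congr p; lia.
- exact: (ipath_cross_ear ear y_path y0S' ynS' ltk ltj ykp ykSp).
Qed.

End Paths.

Definition extend_rank (T : finType) (S' : {set T}) (pi' rk : T -> nat) B' w :=
  if w \in S' then pi' w else B' + rk w.

Definition good_rank (T : finType) (e : rel T) q r (S : {set T}) pi B :=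
  [/\ {in S &, injective pi}, {in S, forall w, pi w < B} &
      forall v x, v \in S -> x <= r -> #|reach_set e S pi x v| <= wbound q x].

Section Extension.
Variables (T : finType) (e : rel T) (S S' : {set T}) (pi' rk : T -> nat) (B' : nat).
Local Notation pi := (extend_rank S' pi' rk B').

Lemma extend_rank_old w : w \in S' -> pi w = pi' w.
Proof. by rewrite /extend_rank => ->. Qed.

Lemma extend_rank_new w : w \notin S' -> pi w = B' + rk w.
Proof. by rewrite /extend_rank => /negbTE ->. Qed.

Hypothesis pi'_lt : {in S', forall w, pi' w < B'}.

Lemma extend_rank_old_lt_new w w' : w \in S' -> w' \notin S' -> pi w < pi w'.
Proof. by move=> wS' w'S'; rewrite extend_rank_old // extend_rank_new // ltn_addr ?pi'_lt. Qed.

Variable L : nat.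
Hypothesis short_paths_stay : forall n y, n < L -> ipath e S y n ->
  y 0 \in S' -> y n \in S' -> forall k, k <= n -> y k \in S'.

Lemma reach_extend_old x w u : x < L -> w \in S' -> reach e S pi x w u -> reach e S' pi' x w u.
Proof.
move=> ltxL wS' [le_uw [n [y [lenx [y_path y0 yn y_int]]]]].
have uS' : u \in S'.
  by apply: contraLR le_uw => uS'; rewrite -ltnNge extend_rank_old_lt_new.
have y_in : forall k, k <= n -> y k \in S'.
  by apply: (short_paths_stay (leq_ltn_trans lenx ltxL) y_path); rewrite ?y0 ?yn.
split; first by rewrite -!extend_rank_old.
exists n, y; split => //; split => //.
- by case: y_path => y_adj y_inj _; split.
- by move=> k ltk; rewrite -!extend_rank_old ?y_int ?y_in //; lia.
Qed.

Variables (q r R : nat).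
Hypothesis good' : good_rank e q r S' pi' B'.

Lemma good_rank_extend : r < L ->
  {in S :\: S' &, injective rk} -> {in S :\: S', forall w, rk w < R} ->
  (forall v x, v \in S :\: S' -> x <= r -> #|reach_set e S pi x v| <= wbound q x) ->
  good_rank e q r S pi (B' + R).
Proof.
move=> ltrL rk_inj rk_lt new_good; have [pi'_inj _ old_good] := good'.
split=> [w1 w2 w1S w2S|w wS|v x vS lexr].
- case: (boolP (w1 \in S')) => w1S'; case: (boolP (w2 \in S')) => w2S' eq_pi.
  + by apply: pi'_inj => //; rewrite -(extend_rank_old w1S') -(extend_rank_old w2S').
  + by have := extend_rank_old_lt_new w1S' w2S'; rewrite eq_pi ltnn.
  + by have := extend_rank_old_lt_new w2S' w1S'; rewrite eq_pi ltnn.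
  + by move: eq_pi; rewrite !extend_rank_new // => /addnI/rk_inj; apply; rewrite inE ?w1S' ?w2S'.
- case: (boolP (w \in S')) => wS'.
  + by rewrite extend_rank_old // ltn_addr ?pi'_lt.
  + by rewrite extend_rank_new // ltn_add2l rk_lt // inE wS'.
- case: (boolP (v \in S')) => vS'; last by apply: new_good; rewrite // inE vS'.
  apply: leq_trans (old_good v x vS' lexr).
  apply: card_reach_set_le => u /(reach_extend_old (leq_ltn_trans lexr ltrL) vS') ?.
  by rewrite inE; apply/reachP.
Qed.

End Extension.

Section Leaf.
Variables (T : finType) (e : rel T).
Hypotheses (e_sym : symmetric e) (e_irr : irreflexive e).
Variables (S : {set T}) (v : T) (pi' : T -> nat) (B' q r : nat).
Hypotheses (vS : v \in S) (deg_v : deg e S v <= 1) (ltrq : r < q).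
Hypothesis good' : good_rank e q r (S :\ v) pi' B'.
Local Notation pi := (extend_rank (S :\ v) pi' (fun=> 0) B').

Lemma leaf_paths_stay n y : n < r.+1 -> ipath e S y n ->
  y 0 \in S :\ v -> y n \in S :\ v -> forall k, k <= n -> y k \in S :\ v.
Proof. by move=> _ y_path /setD1P[y0v _] /setD1P[ynv _]; apply: ipath_avoid_leaf. Qed.

(* A path into the leaf v arrives through its unique neighbour. *)
Lemma card_reach_leaf x : x <= r -> #|reach_set e S pi x v| <= wbound q x.
Proof.
have [_ pi'_lt old_good] := good'.
case: (posnP x) => [->|x_gt0] lexr.
  apply: leq_trans (card_reach_set_le (Z := [set v]) _) _; last by rewrite cards1.
  by move=> u /reach0 ->; rewrite inE.
move: deg_v; rewrite leq_eqVlt ltnS leqn0 /deg => /orP[/cards1P[a nb_v]|/eqP/cards0_eq nb_v];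
  last first.
  apply: leq_trans (card_reach_set_le (Z := [set v]) _) (_ : _ <= wbound q x).
  - move=> u /(reach_last e_sym) [->|[z [zS vz] _]]; first by rewrite inE.
    have : z \in [set u in S | e v u] by rewrite inE zS.
    by rewrite nb_v in_set0.
  - by rewrite cards1 wbound_ge1.
have : a \in [set u in S | e v u] by rewrite nb_v set11.
rewrite inE => /andP[aS va].
have aS' : a \in S :\ v by rewrite in_setD1 aS andbT; apply: contraTneq va => ->; rewrite e_irr.
apply: leq_trans (card_reach_set_le (Z := v |: reach_set e (S :\ v) pi' x.-1 a) _) _.
  move=> u /(reach_last e_sym) [->|[z [zS vz] reach_zu]]; first by rewrite !inE eqxx.
  have za : z = a by apply/set1P; rewrite -nb_v inE zS.
  rewrite za in reach_zu; rewrite !inE; apply/orP; right; apply/reachP.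
  have ltxr : x.-1 < r.+1 by lia.
  exact: (reach_extend_old pi'_lt leaf_paths_stay ltxr aS' reach_zu).
rewrite cardsU1; have := old_good a x.-1 aS' (leq_trans (leq_pred x) lexr).
by have := wbound_succ x_gt0 (leq_ltn_trans lexr ltrq); case: (_ \notin _); lia.
Qed.

Lemma good_rank_del_leaf : good_rank e q r S pi (B' + 1).
Proof.
have [_ pi'_lt _] := good'.
have diff_v w : w \in S :\: (S :\ v) -> w = v.
  by move=> /setDP[wS]; rewrite in_setD1 wS andbT negbK => /eqP.
apply: (good_rank_extend pi'_lt leaf_paths_stay good') => //.
- by move=> w1 w2 /diff_v -> /diff_v ->.
- by move=> w x /diff_v ->; exact: card_reach_leaf.
Qed.

End Leaf.

Section EarStep.
Variables (T : finType) (e : rel T).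
Hypothesis e_sym : symmetric e.
Variables (S S' : {set T}) (p : nat -> T) (M : nat).
Hypothesis ear : ear_of e S S' p M.
Variables (pi' rk : T -> nat) (B' c q : nat).
Hypothesis pi'_lt : {in S', forall w, pi' w < B'}.
Local Notation pi := (extend_rank S' pi' rk B').
Hypothesis center_min : forall j, 0 < j <= M -> j != c -> pi (p c) < pi (p j).
Hypothesis rank_incr : forall j1 j2, 0 < j1 -> j1 < j2 -> j2 < c -> pi (p j1) < pi (p j2).
Hypotheses (le_q_c : q <= c) (le_q_Mc : q <= M.+1 - c).

Lemma reach_ear_back x i u n y : x < q -> 0 < i <= c -> n.+1 <= x ->
  reach_path e S pi (p i) u n.+1 y -> y n = p i.-1 ->
  (exists2 t, (t <= x) && (t < i) & u = p (i - t)) \/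
  (i <= x /\ reach e S' pi' (x - i) (p 0) u).
Proof.
move=> ltxq lt_i lenx [y_path y0 yn y_int] y_prev.
have [_ _ q_nb _ _] := ear_of_rev ear.
have rev0 : (fun t => y (n.+1 - t)) 0 = (fun j => p (M.+1 - j)) (M.+1 - i).
  by rewrite /= subn0 subKn //; lia.
have rev1 : (fun t => y (n.+1 - t)) 1 = (fun j => p (M.+1 - j)) (M.+1 - i).+1.
  by rewrite /= subn1 /= y_prev; congr p; lia.
have walk := ipath_along_chain (ipath_rev e_sym y_path) q_nb rev0 rev1.
have y_walk t : t <= n.+1 -> t <= i -> y (n.+1 - t) = p (i - t).
  by move=> letn leti; rewrite (walk t) ?add0n //; [congr p | ]; lia.
case: (ltnP n.+1 i) => [ltni|leni].
  by left; exists n.+1; [lia | rewrite -y0 -(subnn n.+1) y_walk //; lia].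
right; split; first lia.
have y_end : y (n.+1 - i) = p 0 by rewrite y_walk ?subnn.
have p0S' : p 0 \in S' := ear_of_end0 ear.
case: (eqVneq i n.+1) => [eq_in|neq_in].
  have -> : u = p 0 by rewrite -y0 -y_end eq_in subnn.
  exact: reach_refl.
have lt_u_p0 : pi u < pi (p 0) by rewrite -y_end; apply: y_int; lia.
have uS' : u \in S'.
  apply: contraLR lt_u_p0 => uS'; rewrite -leqNgt ltnW //.
  exact: extend_rank_old_lt_new.
have pre_path := ipath_prefix y_path (leq_subr i n.+1).
have stay := ipath_short_avoid_ear e_sym ear pre_path ltac:(lia)
  (etrans (congr1 _ y0) uS') (etrans (congr1 _ y_end) p0S').
have old := @extend_rank_old _ S' pi' rk B'.
split; first by rewrite -!old //; exact: ltnW.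
exists (n.+1 - i), y; split; first lia.
split => //.
- by case: pre_path => y_adj y_inj _; split.
- by move=> k ltk; rewrite -!old ?y_int ?stay //; lia.
Qed.

Lemma reach_ear_forward x i u n y : x < q -> 0 < i <= c -> n.+1 <= x ->
  pi u <= pi (p i) -> reach_path e S pi (p i) u n.+1 y -> y n = p i.+1 ->
  (i < c) && (c - i <= x) /\ u = p c.
Proof.
move=> ltxq lt_i lenx le_u [y_path y0 yn y_int] y_next.
have [_ _ p_nb _ _] := ear.
have rev0 : (fun t => y (n.+1 - t)) 0 = p i by rewrite /= subn0.
have rev1 : (fun t => y (n.+1 - t)) 1 = p i.+1 by rewrite /= subn1.
have walk := ipath_along_chain (ipath_rev e_sym y_path) p_nb rev0 rev1.
have y_walk t : t <= n.+1 -> y (n.+1 - t) = p (i + t).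
  by move=> letn; rewrite (walk t) ?add0n //; lia.
have u_end : u = p (i + n.+1) by rewrite -y0 -(subnn n.+1) y_walk.
have lt_end : 0 < i + n.+1 <= M by lia.
case: (ltngtP (i + n.+1) c) => [lt_c|gt_c|eq_c].
- by have := @rank_incr i (i + n.+1) ltac:(lia) ltac:(lia) lt_c; rewrite -u_end ltnNge le_u.
- case: (eqVneq i c) => [eq_ic|neq_ic].
    by have := center_min lt_end ltac:(lia); rewrite -u_end -eq_ic ltnNge le_u.
  have y_c : y (n.+1 - (c - i)) = p c by rewrite y_walk ?subnKC //; lia.
  have := y_int (n.+1 - (c - i)) ltac:(lia); rewrite y_c.
  by have := center_min lt_end ltac:(lia); rewrite -u_end; lia.
- by split; [apply/andP; split; lia | rewrite u_end eq_c].
Qed.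

Lemma reach_ear x i u : x < q -> 0 < i <= c -> reach e S pi x (p i) u ->
  [\/ exists2 t, (t <= x) && (t < i) & u = p (i - t),
      i <= x /\ reach e S' pi' (x - i) (p 0) u |
      (i < c) && (c - i <= x) /\ u = p c].
Proof.
move=> ltxq lt_i [le_u [[|n] [y [lenx y_rpath]]]].
  by case: y_rpath => _ y0 yn _; apply: Or31; exists 0; [lia | rewrite subn0 -yn -y0].
have [[y_adj _ y_in] _ yn _] := y_rpath.
have [_ _ p_nb _ _] := ear.
have e_last : e (p i) (y n) by rewrite -yn e_sym y_adj.
case: (p_nb i _ ltac:(lia) (y_in n (leqnSn n)) e_last) => y_n.
- by case: (reach_ear_back ltxq lt_i lenx y_rpath y_n) => ?; [apply: Or31 | apply: Or32].
- by apply: Or33; apply: (reach_ear_forward ltxq lt_i lenx le_u y_rpath y_n).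
Qed.

Lemma card_reach_ear r x i : r < q -> x <= r -> 0 < i <= c ->
  (forall x', x' <= r -> #|reach_set e S' pi' x' (p 0)| <= wbound q x') ->
  #|reach_set e S pi x (p i)| <= wbound q x.
Proof.
move=> ltrq lexr lt_i good0; set k := (minn x i.-1).+1.
pose back := (fun t : 'I_k => p (i - t)) @: [set: 'I_k].
pose via0 := if i <= x then reach_set e S' pi' (x - i) (p 0) else set0.
pose center := if (i < c) && (c - i <= x) then [set p c] else set0.
apply: leq_trans (card_reach_set_le (Z := back :|: via0 :|: center) _) _.
  move=> u /(reach_ear (leq_ltn_trans lexr ltrq) lt_i) [[t ltt ->]|[leix reach0u]|[near ->]].
  - have ltk : t < k by rewrite /k; lia.
    by rewrite !inE; apply/orP; left; apply/orP; left; apply/imsetP; exists (Ordinal ltk).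
  - by rewrite !inE /via0 leix inE; apply/orP; left; apply/orP; right; apply/reachP.
  - by rewrite !inE /center near inE eqxx orbT.
have card_back : #|back| <= k by rewrite (leq_trans (leq_imset_card _ _)) // cardsT card_ord.
have card_via0 : #|via0| <= if i <= x then wbound q (x - i) else 0.
  by rewrite /via0; case: ifP => ?; [apply: good0; lia | rewrite cards0].
have card_center : #|center| <= if (i < c) && (c - i <= x) then 1 else 0.
  by rewrite /center; case: ifP => _; rewrite ?cards1 ?cards0.
apply: leq_trans (leq_card_setU _ _) _.
apply: leq_trans (leq_add (leq_card_setU _ _) (leqnn _)) _.
by apply: leq_trans (wbound_ear (i := i) _ _ le_q_c); lia.
Qed.

End EarStep.

Definition ear_rank M c j := if j < c then j.*2 else if j == c then 0 else (M.+1 - j).*2.+1.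

Section EarRank.
Variables (M c : nat).

Lemma ear_rank_inj j1 j2 : 0 < j1 <= M -> 0 < j2 <= M ->
  ear_rank M c j1 = ear_rank M c j2 -> j1 = j2.
Proof.
rewrite /ear_rank => lt1 lt2.
by case: (ltnP j1 c); case: (ltnP j2 c); case: (eqVneq j1 c); case: (eqVneq j2 c); lia.
Qed.

Lemma ear_rank_lt j : 0 < j <= M -> ear_rank M c j < M.+1.*2.
Proof. by rewrite /ear_rank => ltj; case: (ltnP j c); case: (eqVneq j c); lia. Qed.

Lemma ear_rank_center_min j : 0 < j <= M -> j != c -> ear_rank M c c < ear_rank M c j.
Proof. by rewrite /ear_rank ltnn eqxx => ltj /negbTE ->; case: (ltnP j c); lia. Qed.

Lemma ear_rank_incr j1 j2 : j1 < j2 < c -> ear_rank M c j1 < ear_rank M c j2.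
Proof. by move=> lt12; rewrite /ear_rank !ifT; lia. Qed.

Lemma ear_rank_decr j1 j2 : c < j1 < j2 -> j2 <= M -> ear_rank M c j2 < ear_rank M c j1.
Proof. by move=> lt12 le2; rewrite /ear_rank !ifF; lia. Qed.

End EarRank.

Section StrictEar.
Variables (T : finType) (e : rel T).
Hypothesis e_sym : symmetric e.
Variables (S : {set T}) (a : T) (s : seq T).
Hypotheses (ear_as : strict_ear e S a s) (s_gt0 : 0 < size s).
Local Notation S' := (S :\: [set w | w \in internal a s]).
Local Notation p := (nth a (a :: s)).
Local Notation M := (size s).-1.

Lemma ear_of_strict_ear : ear_of e S S' p M.
Proof.
case/and4P: ear_as => /andP[as_path as_uniq] as_in _ as_deg.
have sizeM : size s = M.+1 by rewrite prednK.
have mem_int w : reflect (exists2 k, 0 < k <= M & w = p k) (w \in internal a s).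
  by apply: (iffP (mem_internalP _ _ _)) => -[k ltk ->]; exists k => //; lia.
have p_in j : j <= M.+1 -> p j \in S.
  by move=> lej; apply: (allP as_in); apply: mem_nth; rewrite /= sizeM.
have p_inj j1 j2 : j1 <= M.+1 -> j2 <= M.+1 -> p j1 = p j2 -> j1 = j2.
  by move=> le1 le2; apply: (uniqP a as_uniq); rewrite inE /= sizeM.
have p_adj j : j <= M -> e (p j) (p j.+1).
  by move=> lej; apply: (pathP a as_path); rewrite sizeM.
have p_out j : 0 < j <= M -> p j \notin S'.
  by move=> ltj; rewrite in_setD inE negb_and negbK; apply/orP; left; apply/mem_int; exists j.
split => // [j z ltj zS pj_z|w wS].
- have pj_int : p j \in internal a s by apply/mem_int; exists j.
  apply: (deg2_neighbours (eqP (allP as_deg _ pj_int))) => //; try (apply: p_in; lia).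
  + by rewrite e_sym; have := p_adj j.-1; rewrite prednK; [apply; lia | lia].
  + by apply: p_adj; lia.
  + by apply/eqP => /p_inj; lia.
- by rewrite in_setD wS andbT negbK inE => /mem_int.
Qed.

Variables (pi' : T -> nat) (B' q r : nat).
Hypotheses (ltrq : r < q) (len_s : 2 * q <= size s).
Hypothesis good' : good_rank e q r S' pi' B'.

Definition strict_ear_rank w := ear_rank M q (index w (a :: s)).
Local Notation pi := (extend_rank S' pi' strict_ear_rank B').

Lemma strict_ear_rank_nth j : 0 < j <= M -> strict_ear_rank (p j) = ear_rank M q j.
Proof.
case/and4P: ear_as => /andP[_ as_uniq] _ _ _ ltj.
by rewrite /strict_ear_rank index_uniq //=; lia.
Qed.

Lemma extend_rank_ear j : 0 < j <= M -> pi (p j) = B' + ear_rank M q j.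
Proof.
move=> ltj; have [_ _ _ p_out _] := ear_of_strict_ear.
by rewrite extend_rank_new ?p_out // strict_ear_rank_nth.
Qed.

(* The vertices p i with i > q are handled by reading the ear backwards. *)
Lemma card_reach_strict_ear x i : x <= r -> 0 < i <= M ->
  #|reach_set e S pi x (p i)| <= wbound q x.
Proof.
move=> lexr lt_i; have ear := ear_of_strict_ear.
have [_ pi'_lt good0] := good'.
case: (leqP i q) => [leiq|ltqi].
- apply: (card_reach_ear e_sym ear pi'_lt _ _ (leqnn q) _ ltrq lexr) => //.
  + move=> j ltj neq_jq; rewrite !extend_rank_ear //; last lia.
    by rewrite ltn_add2l ear_rank_center_min.
  + move=> j1 j2 lt1 lt12 lt2; rewrite !extend_rank_ear; try lia.
    by rewrite ltn_add2l ear_rank_incr //; lia.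
  + lia.
  + lia.
  + by move=> x' lex'; apply: good0 => //; exact: ear_of_end0 ear.
- have -> : p i = (fun j => p (M.+1 - j)) (M.+1 - i) by rewrite /= subKn //; lia.
  apply: (card_reach_ear e_sym (ear_of_rev ear) pi'_lt (c := M.+1 - q) _ _ _ _ ltrq lexr) => /=.
  + move=> j ltj neq_jq; rewrite subKn; last lia.
    rewrite !extend_rank_ear; try lia.
    by rewrite ltn_add2l ear_rank_center_min //; lia.
  + move=> j1 j2 lt1 lt12 lt2; rewrite !extend_rank_ear; try lia.
    by rewrite ltn_add2l ear_rank_decr //; lia.
  + lia.
  + lia.
  + lia.
  + by move=> x' lex'; apply: good0 => //; exact: ear_of_end0 (ear_of_rev ear).
Qed.

Lemma good_rank_del_ear : good_rank e q r S pi (B' + M.+1.*2).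
Proof.
have ear := ear_of_strict_ear; have [_ _ _ _ p_onto] := ear.
have [_ pi'_lt _] := good'.
have diff_ear w : w \in S :\: S' -> exists2 j, 0 < j <= M & w = p j.
  by case/setDP => wS wS'; apply: p_onto.
apply: (good_rank_extend (L := q) pi'_lt _ good' ltrq).
- move=> n y ltnq y_path; apply: (ipath_short_avoid_ear e_sym ear y_path); lia.
- move=> _ _ /diff_ear[j1 lt1 ->] /diff_ear[j2 lt2 ->].
  by rewrite !strict_ear_rank_nth // => /ear_rank_inj ->.
- by move=> _ /diff_ear[j ltj ->]; rewrite strict_ear_rank_nth // ear_rank_lt.
- by move=> _ x /diff_ear[i lt_i ->] lexr; apply: card_reach_strict_ear.
Qed.

End StrictEar.

Lemma reducible_good_rank (T : finType) (e : rel T) q r (S : {set T}) :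
  symmetric e -> irreflexive e -> r < q -> reducible (2 * q) e S ->
  exists pi B, good_rank e q r S pi B.
Proof.
move=> e_sym e_irr ltrq; elim=> [|S0 S1 step _ [pi' [B' good']]].
  by exists (fun=> 0), 1; split => [w1|w|v x]; rewrite inE.
case: step => [[v [vS deg_v eqS]]|[[v [vS deg_v eqS]]|[a [s [ear_as len_s eqS]]]]];
  subst S1; do 2 eexists.
1,2: by apply: good_rank_del_leaf good'; rewrite ?deg_v.
by apply: good_rank_del_ear good' => //; lia.
Qed.

Theorem mainTheorem18 (T : finType) (e : rel T) (r q : nat) :
  symmetric e -> irreflexive e ->
  0 < r -> 0 < q -> r + 1 <= q ->
  path_degenerate (2 * q) e ->
  exists pi : T -> nat, good_linear_order e pi (f_bound q r) r.
Proof.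
move=> e_sym e_irr _ _ lerq reducible_T.
have ltrq : r < q by rewrite -addn1.
have [pi [B [pi_inj _ pi_good]]] := reducible_good_rank e_sym e_irr ltrq reducible_T.
exists pi; split => [w1 w2|x lexr v]; first by apply: pi_inj; rewrite in_setT.
rewrite WReachE; apply: Rle_trans (wbound_le_f_bound ltrq lexr).
by apply/le_INR/leP/pi_good.
Qed.
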